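(* Consider the two-type Bellman–Harris process described in the context. Let $H(t),k_1(t),k_2(t)$ be nonnegative functions on $[0,\infty)$ with $\lim_{t\to\infty}k_i(t)=0$ ($i=1,2$) and $\lim_{t\to\infty}H(t)=\infty$. (a) If there exist functions $k_i(t,\lambda_i)$, $i=1,2$, with $k_i(t,\lambda_i)\sim\lambda_ik_i(t)$ as $t\to\infty$ for every fixed $\lambda_i>0$, and $$\lim_{t\to\infty}H(t)\mathbf{Q}(t;1-k_1(t,\lambda_1),1-k_2(t,\lambda_2))=\mathbf{h}(\lambda_1,\lambda_2),\quad\lambda_1,\lambda_2>0,$$ for a function $\mathbf{h}=(h_1,h_2)$ with components continuous in both arguments, then $$\lim_{t\to\infty}H(t)\mathbf{Q}(t;e^{-\lambda_1k_1(t)},e^{-\lambda_2k_2(t)})=\mathbf{h}(\lambda_1,\lambda_2),\quad\lambda_1,\lambda_2>0.$$ (b) If $\lim_{t\to\infty}H(t)\mathbf{Q}(t;1,1-k_2(t,\lambda_2))=\mathbf{h}(\lambda_2)$ for $\lambda_2>0$, for a function $\mathbf{h}(\lambda_2)=(h_1(\lambda_2),h_2(\lambda_2))$ with continuous components (and $k_2(t,\lambda_2)\sim\lambda_2k_2(t)$ for each fixed $\lambda_2>0$), then $\lim_{t\to\infty}H(t)\mathbf{Q}(t;1,e^{-\lambda_2k_2(t)})=\mathbf{h}(\lambda_2)$ for $\lambda_2>0$.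
   Context: Two-type Bellman–Harris branching process $\mathbf{Z}(t)=(Z_1(t),Z_2(t))$ (particles of type $i\in\{1,2\}$ have life-length distribution $G_i$ and offspring generating function $f_i(s_1,s_2)$, and evolve independently). For $\mathbf{s}=(s_1,s_2)\in[0,1]^2$, $F_i(t;\mathbf{s})=\mathbf{E}[s_1^{Z_1(t)}s_2^{Z_2(t)}\mid\text{one initial particle of type }i]$ and $\mathbf{Q}(t;\mathbf{s})=(1-F_1(t;\mathbf{s}),1-F_2(t;\mathbf{s}))^\dagger$. *)

From HB Require Import structures.
From mathcomp Require Import all_boot all_order all_algebra.
From mathcomp Require Import all_classical all_reals all_analysis.
Set Implicit Arguments. Unset Strict Implicit. Unset Printing Implicit Defensive.
Import Order.TTheory GRing.Theory Num.Theory.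
Import numFieldNormedType.Exports.
Local Open Scope classical_set_scope.
Local Open Scope ring_scope.

Definition pgf2 {R : realType} (q : nat -> nat -> R) (s1 s2 : R) : R :=
  limn (fun N => \sum_(n < N) \sum_(m < N) q n m * s1 ^+ n * s2 ^+ m).

Definition pmf2 {R : realType} (q : nat -> nat -> R) : Prop :=
  (forall n m, 0 <= q n m) /\
  (fun N => \sum_(n < N) \sum_(m < N) q n m) @ \oo --> (1 : R).

(* q is a sub-probability mass function on nat x nat (total mass <= 1;
   a defect accounts for a possibly infinite population). *)
Definition subpmf2 {R : realType} (q : nat -> nat -> R) : Prop :=
  (forall n m, 0 <= q n m) /\
  (forall N, \sum_(n < N) \sum_(m < N) q n m <= 1).

(* Data of a two-type Bellman-Harris process (types 0,1 stand for 1,2):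
   G i   : life-length distribution of a type-i particle (on [0,oo)),
   q i   : offspring distribution of a type-i particle,
           f_i(s1,s2) = pgf2 (q i) s1 s2,
   p i t : law of (Z_1(t), Z_2(t)) started from one type-i particle,
           F_i(t;s1,s2) = pgf2 (p i t) s1 s2.
   The process is characterised by the Bellman-Harris integral equations
   F_i(t;s) = s_i (1 - G_i(t)) + int_[0,t] f_i(F(t-u;s)) dG_i(u). *)
Definition bellman_harris2 {R : realType}
  (G : 'I_2 -> probability R R) (q : 'I_2 -> nat -> nat -> R)
  (p : 'I_2 -> R -> nat -> nat -> R) : Prop :=
  (forall i, G i [set x : R | x < 0] = 0%E) /\
  (forall i, pmf2 (q i)) /\
  (forall i t, 0 <= t -> subpmf2 (p i t)) /\
  (forall i s1 s2, measurable_fun setT (fun t => pgf2 (p i t) s1 s2)) /\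
  (forall i t s1 s2, 0 <= t -> 0 <= s1 <= 1 -> 0 <= s2 <= 1 ->
     pgf2 (p i t) s1 s2 =
       (if i == ord0 then s1 else s2) * fine (G i [set x : R | t < x])
       + Rintegral (G i) [set u : R | 0 <= u <= t]
           (fun u => pgf2 (q i) (pgf2 (p ord0 (t - u)) s1 s2)
                                (pgf2 (p (lift ord0 ord0) (t - u)) s1 s2))).

Definition BH_Q {R : realType} (p : 'I_2 -> R -> nat -> nat -> R)
  (i : 'I_2) (t s1 s2 : R) : R := 1 - pgf2 (p i t) s1 s2.

Definition equiv_pinfty {R : realType} (f g : R -> R) : Prop :=
  forall eps : R, 0 < eps -> \forall t \near +oo, `|f t - g t| <= eps * `|g t|.

(* Since F_i(t;.) is a generating function with nonnegative coefficients,
   Q_i(t;s) is nonincreasing in each coordinate of s on [0,1]^2.  As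
   k(t,a) ~ a k(t) and k(t) -> 0, the bounds 1 - x <= e^{-x} <= 1/(1+x) give,
   for b < l < a and t large,  1 - k(t,a) <= e^{-l k(t)} <= 1 - k(t,b).
   Hence H Q(t; e^{-l1 k1}, e^{-l2 k2}) is squeezed between H Q at the points
   1 - k(t,a) and 1 - k(t,b), whose limits h(a1,a2) and h(b1,b2) are close to
   h(l1,l2) once a, b are chosen near l, moving one coordinate at a time by
   separate continuity of h.  Part (b) is the special case k1 = 0. *)

From HB Require Import structures.
From mathcomp Require Import all_boot all_order all_algebra.
From mathcomp Require Import all_classical all_reals all_analysis.
From mathcomp Require Import ring lra.
Import Order.TTheory GRing.Theory Num.Theory.
Import numFieldNormedType.Exports.
Local Open Scope classical_set_scope.
Local Open Scope ring_scope.

Section Pgf2Monotone.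
Variable R : realType.
Implicit Types (q : nat -> nat -> R).

Definition pgf2_partial q (s1 s2 : R) N :=
  \sum_(n < N) \sum_(m < N) q n m * s1 ^+ n * s2 ^+ m.

Lemma pgf2_partial_term_ge0 q s1 s2 n m : (forall n m, 0 <= q n m) ->
  0 <= s1 -> 0 <= s2 -> 0 <= q n m * s1 ^+ n * s2 ^+ m.
Proof. by move=> q0 s10 s20; rewrite !mulr_ge0 ?exprn_ge0. Qed.

Lemma nondecreasing_pgf2_partial q s1 s2 : (forall n m, 0 <= q n m) ->
  0 <= s1 -> 0 <= s2 -> nondecreasing_seq (pgf2_partial q s1 s2).
Proof.
move=> q0 s10 s20; apply/nondecreasing_seqP => N; rewrite /pgf2_partial.
rewrite big_ord_recr /=; apply: ler_wpDr.
  by apply: sumr_ge0 => m _; exact: pgf2_partial_term_ge0.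
apply: ler_sum => n _; rewrite big_ord_recr /= lerDl.
exact: pgf2_partial_term_ge0.
Qed.

Lemma le_pgf2_partial q s1 s2 s1' s2' N : (forall n m, 0 <= q n m) ->
  0 <= s1 <= s1' -> 0 <= s2 <= s2' ->
  pgf2_partial q s1 s2 N <= pgf2_partial q s1' s2' N.
Proof.
move=> q0 /andP[s10 s11'] /andP[s20 s22'].
apply: ler_sum => n _; apply: ler_sum => m _.
have s1X : s1 ^+ n <= s1' ^+ n by rewrite lerXn2r // nnegrE (le_trans s10).
have s2X : s2 ^+ m <= s2' ^+ m by rewrite lerXn2r // nnegrE (le_trans s20).
by rewrite ler_pM ?mulr_ge0 ?exprn_ge0 ?ler_wpM2l.
Qed.

Lemma pgf2_partial_le1 q s1 s2 N : subpmf2 q ->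
  0 <= s1 <= 1 -> 0 <= s2 <= 1 -> pgf2_partial q s1 s2 N <= 1.
Proof.
move=> [q0 qN] /andP[s10 s11] /andP[s20 s21]; apply: le_trans (qN N).
apply: ler_sum => n _; apply: ler_sum => m _; rewrite -mulrA.
by rewrite ler_piMr ?mulr_ge0 ?exprn_ge0 ?mulr_ile1 ?exprn_ge0 ?exprn_ile1.
Qed.

Lemma is_cvgn_pgf2_partial q s1 s2 : subpmf2 q ->
  0 <= s1 <= 1 -> 0 <= s2 <= 1 -> cvgn (pgf2_partial q s1 s2).
Proof.
move=> qsub s1I s2I; apply: nondecreasing_is_cvgn.
  case: qsub => q0 _; case/andP: s1I => s10 _; case/andP: s2I => s20 _.
  exact: nondecreasing_pgf2_partial.
by exists 1 => _ [N _ <-]; exact: pgf2_partial_le1.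
Qed.

Lemma le_pgf2 q s1 s2 s1' s2' : subpmf2 q ->
  0 <= s1 <= s1' -> s1' <= 1 -> 0 <= s2 <= s2' -> s2' <= 1 ->
  pgf2 q s1 s2 <= pgf2 q s1' s2'.
Proof.
move=> qsub s1I s1'1 s2I s2'1; have [q0 _] := qsub.
have unit_le (s s' : R) : 0 <= s <= s' -> s' <= 1 -> 0 <= s <= 1 /\ 0 <= s' <= 1.
  by case/andP=> s0 ss' s'1; rewrite s0 s'1 (le_trans ss') // (le_trans s0).
have [[s1I1 s1'I1] [s2I1 s2'I1]] := (unit_le _ _ s1I s1'1, unit_le _ _ s2I s2'1).
rewrite /pgf2 -/(pgf2_partial q s1 s2) -/(pgf2_partial q s1' s2').
apply: ler_lim; [exact: is_cvgn_pgf2_partial..|].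
by apply: nearW => N; exact: le_pgf2_partial.
Qed.

End Pgf2Monotone.

Lemma BH_Q_antitone (R : realType) (G : 'I_2 -> probability R R)
    (q : 'I_2 -> nat -> nat -> R) (p : 'I_2 -> R -> nat -> nat -> R)
    (i : 'I_2) (t s1 s2 s1' s2' : R) :
  bellman_harris2 G q p -> 0 <= t ->
  0 <= s1 <= s1' -> s1' <= 1 -> 0 <= s2 <= s2' -> s2' <= 1 ->
  BH_Q p i t s1' s2' <= BH_Q p i t s1 s2.
Proof.
by move=> [_ [_ [psub _]]] t0 *; rewrite /BH_Q lerB // le_pgf2 //; exact: psub.
Qed.

Lemma expRN_le_1_sub (R : realType) (l m x : R) :
  0 < l -> 0 <= m -> 0 <= x -> l * m * x <= l - m ->
  expR (- (l * x)) <= 1 - m * x.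
Proof.
move=> l0 m0 x0 lmx.
have lx_le := expR_ge1Dx (l * x).
have mx_le1 : m * x <= 1 by nra.
rewrite expRN -div1r ler_pdivrMr ?expR_gt0 //.
apply: le_trans (_ : (1 - m * x) * (1 + l * x) <= _); last first.
  by rewrite ler_wpM2l // subr_ge0.
nra.
Qed.

Section OneSubEquivalentExpR.
Variable R : realType.
Variables (k kl : R -> R).
Hypothesis k_ge0 : \forall t \near +oo, 0 <= k t.
Hypothesis k_to0 : k t @[t --> +oo] --> 0.

Lemma equiv_pinfty_bounds (a b c : R) : 0 <= b < a -> a < c ->
  equiv_pinfty kl (fun t => a * k t) ->
  \forall t \near +oo, b * k t <= kl t <= c * k t.
Proof.
move=> /andP[b0 ba] ac kl_equiv; have a0 : 0 < a by exact: le_lt_trans ba.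
have near_dist e : 0 < e -> \forall t \near +oo, `|kl t - a * k t| <= e * k t.
  move=> e0; have := kl_equiv (e / a) (divr_gt0 e0 a0).
  apply: filterS2 k_ge0 => t kt0.
  rewrite [`|a * _|]ger0_norm; last by rewrite mulr_ge0 // ltW.
  by rewrite mulrA divfK // lt0r_neq0.
near=> t.
have : `|kl t - a * k t| <= (a - b) * k t by near: t; apply: near_dist; lra.
have : `|kl t - a * k t| <= (c - a) * k t by near: t; apply: near_dist; lra.
by rewrite !ler_distl !mulrBl => /andP[_ ?] /andP[? _]; apply/andP; split; lra.
Unshelve. all: by end_near.
Qed.

Lemma near_one_sub_le_expR (a l : R) : 0 < l < a ->
  equiv_pinfty kl (fun t => a * k t) ->
  \forall t \near +oo, 0 <= 1 - kl t <= expR (- (l * k t)).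
Proof.
move=> /andP[l0 la] kl_equiv.
have k_small : \forall t \near +oo, k t < (a + 1)^-1.
  by apply: (cvgr_lt 0 k_to0); rewrite invr_gt0; lra.
near=> t.
have /andP[kl_ge kl_le] : l * k t <= kl t <= (a + 1) * k t.
  by near: t; apply: (@equiv_pinfty_bounds a); rewrite ?(ltW l0) ?la ?ltrDl.
have a1_gt0 : 0 < a + 1 by lra.
have kl_le1 : (a + 1) * k t <= 1.
  rewrite -[leRHS](mulfV (lt0r_neq0 a1_gt0)) ler_pM2l //.
  by apply: ltW; near: t.
have := expR_ge1Dx (- (l * k t)).
by move=> ?; apply/andP; split; lra.
Unshelve. all: by end_near.
Qed.

Lemma near_expR_le_one_sub (b l : R) : 0 < b < l ->
  equiv_pinfty kl (fun t => b * k t) ->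
  \forall t \near +oo, expR (- (l * k t)) <= 1 - kl t <= 1.
Proof.
move=> /andP[b0 bl] kl_equiv.
pose m := (b + l) / 2.
have [bm ml] : b < m /\ m < l by rewrite /m; split; lra.
have m0 : 0 < m by exact: lt_trans bm.
have k_small : \forall t \near +oo, k t < (l - m) / (l * m).
  apply: (cvgr_lt 0 k_to0); apply: divr_gt0; first by rewrite subr_gt0.
  by rewrite mulr_gt0 // (lt_trans b0).
near=> t.
have /andP[kl_ge kl_le] : 0 * k t <= kl t <= m * k t.
  by near: t; apply: (@equiv_pinfty_bounds b); rewrite ?lexx ?b0 ?bm.
have kt0 : 0 <= k t by near: t.
have lm_gt0 : 0 < l * m by rewrite mulr_gt0 // (lt_trans b0).
have lmk : l * m * k t <= l - m.
  by rewrite mulrC -ler_pdivlMr // ltW //; near: t; exact: k_small.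
have := expRN_le_1_sub _ _ _ _ (lt_trans b0 bl) (ltW m0) kt0 lmk.
by rewrite mul0r in kl_ge => ?; apply/andP; split; lra.
Unshelve. all: by end_near.
Qed.

End OneSubEquivalentExpR.

Lemma separately_continuous_approx (R : realType) (g : R -> R -> R)
    (F : R -> set_system R) (side : R -> R -> Prop) (l1 l2 e : R) :
  (forall x : R, ProperFilter (F x)) -> (forall x : R, F x --> x) ->
  (forall x : R, 0 < x -> \forall y \near F x, 0 < y /\ side x y) ->
  (forall x y : R, 0 < x -> 0 < y ->
     (g z y @[z --> x] --> g x y) /\ (g x z @[z --> y] --> g x y)) ->
  0 < l1 -> 0 < l2 -> 0 < e ->
  exists a1 a2,
    [/\ 0 < a1, 0 < a2, side l1 a1, side l2 a2 & `|g l1 l2 - g a1 a2| <= e].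
Proof.
move=> F_proper F_cvg F_side g_cont l1_gt0 l2_gt0 e_gt0.
have e2_gt0 : 0 < e / 2 by rewrite divr_gt0.
have near_close (f : R -> R) x : f z @[z --> x] --> f x ->
    \forall z \near F x, `|f x - f z| <= e / 2.
  by move=> /cvgrPdist_le /(_ _ e2_gt0); exact: F_cvg.
have [a1 [[a1_gt0 side1] close1]] : exists a1, (0 < a1 /\ side l1 a1) /\
    `|g l1 l2 - g a1 l2| <= e / 2.
  apply: (@filter_ex _ _ (F_proper l1)); apply: filterI.
    exact: F_side l1 l1_gt0.
  by apply: near_close; case: (g_cont l1 l2 l1_gt0 l2_gt0).
have [a2 [[a2_gt0 side2] close2]] : exists a2, (0 < a2 /\ side l2 a2) /\
    `|g a1 l2 - g a1 a2| <= e / 2.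
  apply: (@filter_ex _ _ (F_proper l2)); apply: filterI.
    exact: F_side l2 l2_gt0.
  by apply: near_close; case: (g_cont a1 l2 a1_gt0 l2_gt0).
exists a1, a2; split=> //.
by rewrite (le_trans (ler_distD (g a1 l2) _ _)) // [e]splitr lerD.
Qed.

Section ExpRTransfer.
Variable R : realType.
Variables (Phi : R -> R -> R -> R) (k1 k2 : R -> R) (k1l k2l : R -> R -> R).
Variable g : R -> R -> R.
Hypothesis Phi_antitone : \forall t \near +oo, forall s1 s2 s1' s2' : R,
  0 <= s1 <= s1' -> s1' <= 1 -> 0 <= s2 <= s2' -> s2' <= 1 ->
  Phi t s1' s2' <= Phi t s1 s2.
Hypotheses (k1_ge0 : \forall t \near +oo, 0 <= k1 t)
           (k2_ge0 : \forall t \near +oo, 0 <= k2 t).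
Hypotheses (k1_to0 : k1 t @[t --> +oo] --> 0) (k2_to0 : k2 t @[t --> +oo] --> 0).
Hypothesis k1l_equiv :
  forall l : R, 0 < l -> equiv_pinfty (fun t => k1l t l) (fun t => l * k1 t).
Hypothesis k2l_equiv :
  forall l : R, 0 < l -> equiv_pinfty (fun t => k2l t l) (fun t => l * k2 t).
Hypothesis Phi_cvg : forall l1 l2 : R, 0 < l1 -> 0 < l2 ->
  Phi t (1 - k1l t l1) (1 - k2l t l2) @[t --> +oo] --> g l1 l2.
Hypothesis g_cont : forall l1 l2 : R, 0 < l1 -> 0 < l2 ->
  (g x l2 @[x --> l1] --> g l1 l2) /\ (g l1 y @[y --> l2] --> g l1 l2).
Variables (l1 l2 : R).
Hypotheses (l1_gt0 : 0 < l1) (l2_gt0 : 0 < l2).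

Let expR_unit (l : R) (k : R -> R) : 0 < l -> (\forall t \near +oo, 0 <= k t) ->
  \forall t \near +oo, 0 <= expR (- (l * k t)) <= 1.
Proof.
move=> l_gt0; apply: filterS => t kt0.
by rewrite expR_ge0 expR_le1 oppr_le0 mulr_ge0 // ltW.
Qed.

Lemma near_Phi_expR_le e : 0 < e ->
  \forall t \near +oo,
    Phi t (expR (- (l1 * k1 t))) (expR (- (l2 * k2 t))) <= g l1 l2 + e.
Proof.
move=> e_gt0; have e2_gt0 : 0 < e / 2 by rewrite divr_gt0.
have [a1 [a2 [a1_gt0 a2_gt0 l1a1 l2a2 close]]] :=
  @separately_continuous_approx R g (fun x => x^'+) (fun x y => x < y)
    l1 l2 (e / 2) (fun x => at_right_proper_filter x) (fun x => cvg_within _)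
    (fun x x_gt0 => filterS (fun y xy => conj (lt_trans x_gt0 xy) xy)
                            (nbhs_right_gt x))
    g_cont l1_gt0 l2_gt0 e2_gt0.
have Phi_lt : \forall t \near +oo,
    Phi t (1 - k1l t a1) (1 - k2l t a2) < g a1 a2 + e / 2.
  by apply: (cvgr_lt _ (Phi_cvg a1 a2 a1_gt0 a2_gt0)); rewrite ltrDl.
near=> t.
have /andP[s1_ge0 s1_le] : 0 <= 1 - k1l t a1 <= expR (- (l1 * k1 t)).
  near: t; apply: (near_one_sub_le_expR _ _ _ k1_ge0 k1_to0 _ _ _
                     (k1l_equiv a1 a1_gt0)).
  by rewrite l1_gt0 l1a1.
have /andP[s2_ge0 s2_le] : 0 <= 1 - k2l t a2 <= expR (- (l2 * k2 t)).
  near: t; apply: (near_one_sub_le_expR _ _ _ k2_ge0 k2_to0 _ _ _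
                     (k2l_equiv a2 a2_gt0)).
  by rewrite l2_gt0 l2a2.
have /andP[_ e1_le1] : 0 <= expR (- (l1 * k1 t)) <= 1.
  by near: t; exact: expR_unit.
have /andP[_ e2_le1] : 0 <= expR (- (l2 * k2 t)) <= 1.
  by near: t; exact: expR_unit.
have anti : forall s1 s2 s1' s2' : R,
    0 <= s1 <= s1' -> s1' <= 1 -> 0 <= s2 <= s2' -> s2' <= 1 ->
    Phi t s1' s2' <= Phi t s1 s2 by near: t.
have lt_approx : Phi t (1 - k1l t a1) (1 - k2l t a2) < g a1 a2 + e / 2.
  by near: t.
have Phi_le : Phi t (expR (- (l1 * k1 t))) (expR (- (l2 * k2 t)))
    <= Phi t (1 - k1l t a1) (1 - k2l t a2).
  by apply: anti; rewrite ?s1_ge0 ?s2_ge0.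
apply: le_trans Phi_le (le_trans (ltW lt_approx) _).
move: close; rewrite ler_distlC => /andP[_ close].
by rewrite [X in _ <= _ + X](splitr e) addrA lerD2r.
Unshelve. all: by end_near.
Qed.

Lemma near_le_Phi_expR e : 0 < e ->
  \forall t \near +oo,
    g l1 l2 - e <= Phi t (expR (- (l1 * k1 t))) (expR (- (l2 * k2 t))).
Proof.
move=> e_gt0; have e2_gt0 : 0 < e / 2 by rewrite divr_gt0.
have [b1 [b2 [b1_gt0 b2_gt0 b1l1 b2l2 close]]] :=
  @separately_continuous_approx R g (fun x => x^'-) (fun x y => y < x)
    l1 l2 (e / 2) (fun x => at_left_proper_filter x) (fun x => cvg_within _)
    (fun x x_gt0 => filterI (nbhs_left_gt x_gt0) (nbhs_left_lt x))
    g_cont l1_gt0 l2_gt0 e2_gt0.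
have Phi_gt : \forall t \near +oo,
    g b1 b2 - e / 2 < Phi t (1 - k1l t b1) (1 - k2l t b2).
  by apply: (cvgr_gt _ (Phi_cvg b1 b2 b1_gt0 b2_gt0)); rewrite gtrBl.
near=> t.
have /andP[s1_ge s1_le1] : expR (- (l1 * k1 t)) <= 1 - k1l t b1 <= 1.
  near: t; apply: (near_expR_le_one_sub _ _ _ k1_ge0 k1_to0 _ _ _
                     (k1l_equiv b1 b1_gt0)).
  by rewrite b1_gt0 b1l1.
have /andP[s2_ge s2_le1] : expR (- (l2 * k2 t)) <= 1 - k2l t b2 <= 1.
  near: t; apply: (near_expR_le_one_sub _ _ _ k2_ge0 k2_to0 _ _ _
                     (k2l_equiv b2 b2_gt0)).
  by rewrite b2_gt0 b2l2.
have /andP[e1_ge0 _] : 0 <= expR (- (l1 * k1 t)) <= 1.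
  by near: t; exact: expR_unit.
have /andP[e2_ge0 _] : 0 <= expR (- (l2 * k2 t)) <= 1.
  by near: t; exact: expR_unit.
have anti : forall s1 s2 s1' s2' : R,
    0 <= s1 <= s1' -> s1' <= 1 -> 0 <= s2 <= s2' -> s2' <= 1 ->
    Phi t s1' s2' <= Phi t s1 s2 by near: t.
have gt_approx : g b1 b2 - e / 2 < Phi t (1 - k1l t b1) (1 - k2l t b2).
  by near: t.
have Phi_ge : Phi t (1 - k1l t b1) (1 - k2l t b2)
    <= Phi t (expR (- (l1 * k1 t))) (expR (- (l2 * k2 t))).
  by apply: anti; rewrite ?e1_ge0 ?e2_ge0.
apply: le_trans (le_trans _ (ltW gt_approx)) Phi_ge.
move: close; rewrite ler_distlC => /andP[close _].
by rewrite [X in _ - X <= _](splitr e) opprD addrA lerD2r.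
Unshelve. all: by end_near.
Qed.

Lemma cvg_Phi_expR :
  Phi t (expR (- (l1 * k1 t))) (expR (- (l2 * k2 t))) @[t --> +oo] --> g l1 l2.
Proof.
apply/cvgrPdist_le => e e_gt0.
near=> t; rewrite ler_distlC; apply/andP; split; near: t.
- exact: near_le_Phi_expR.
- exact: near_Phi_expR_le.
Unshelve. all: by end_near.
Qed.

End ExpRTransfer.

Lemma near_pinfty_nonneg (R : realType) (P : R -> Prop) :
  (forall t, 0 <= t -> P t) -> \forall t \near +oo, P t.
Proof.
move=> P_nonneg; apply: filterS (nbhs_pinfty_ge (real0 R)) => t.
exact: P_nonneg.
Qed.

Lemma equiv_pinfty_0 (R : realType) (l : R) :
  equiv_pinfty (fun _ => 0) (fun _ => l * 0).
Proof. by move=> e _; apply: nearW => t; rewrite mulr0 subr0 normr0 mulr0. Qed.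

Theorem lemma6 (R : realType)
  (G : 'I_2 -> probability R R) (q : 'I_2 -> nat -> nat -> R)
  (p : 'I_2 -> R -> nat -> nat -> R)
  (HBH : bellman_harris2 G q p)
  (H k1 k2 : R -> R)
  (H_ge0 : forall t : R, 0 <= t -> 0 <= H t)
  (k1_ge0 : forall t : R, 0 <= t -> 0 <= k1 t)
  (k2_ge0 : forall t : R, 0 <= t -> 0 <= k2 t)
  (k1_to0 : k1 x @[x --> +oo] --> 0)
  (k2_to0 : k2 x @[x --> +oo] --> 0)
  (H_tooo : H x @[x --> +oo] --> +oo) :
  (* (a) *)
  (forall (k1l k2l : R -> R -> R) (h : 'I_2 -> R -> R -> R),
     (forall l1 : R, 0 < l1 -> equiv_pinfty (fun t => k1l t l1) (fun t => l1 * k1 t)) ->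
     (forall l2 : R, 0 < l2 -> equiv_pinfty (fun t => k2l t l2) (fun t => l2 * k2 t)) ->
     (forall (i : 'I_2) (l1 l2 : R), 0 < l1 -> 0 < l2 ->
        H t * BH_Q p i t (1 - k1l t l1) (1 - k2l t l2) @[t --> +oo]
          --> h i l1 l2) ->
     (forall (i : 'I_2) (l1 l2 : R), 0 < l1 -> 0 < l2 ->
        (h i x l2 @[x --> l1] --> h i l1 l2) /\
        (h i l1 y @[y --> l2] --> h i l1 l2)) ->
     forall (i : 'I_2) (l1 l2 : R), 0 < l1 -> 0 < l2 ->
        H t * BH_Q p i t (expR (- (l1 * k1 t))) (expR (- (l2 * k2 t)))
          @[t --> +oo] --> h i l1 l2)
  /\
  (* (b) *)
  (forall (k2l : R -> R -> R) (h : 'I_2 -> R -> R),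
     (forall l2 : R, 0 < l2 -> equiv_pinfty (fun t => k2l t l2) (fun t => l2 * k2 t)) ->
     (forall (i : 'I_2) (l2 : R), 0 < l2 ->
        H t * BH_Q p i t 1 (1 - k2l t l2) @[t --> +oo] --> h i l2) ->
     (forall (i : 'I_2) (l2 : R), 0 < l2 -> h i y @[y --> l2] --> h i l2) ->
     forall (i : 'I_2) (l2 : R), 0 < l2 ->
        H t * BH_Q p i t 1 (expR (- (l2 * k2 t))) @[t --> +oo] --> h i l2).
Proof.
have HQ_antitone i : \forall t \near +oo, forall s1 s2 s1' s2' : R,
    0 <= s1 <= s1' -> s1' <= 1 -> 0 <= s2 <= s2' -> s2' <= 1 ->
    H t * BH_Q p i t s1' s2' <= H t * BH_Q p i t s1 s2.
  apply: near_pinfty_nonneg => t t_ge0 s1 s2 s1' s2' s1I s1'1 s2I s2'1.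
  apply: ler_wpM2l; first exact: H_ge0.
  exact: (BH_Q_antitone _ _ _ _ i t _ _ _ _ HBH t_ge0 s1I s1'1 s2I s2'1).
have k1_near := near_pinfty_nonneg _ _ k1_ge0.
have k2_near := near_pinfty_nonneg _ _ k2_ge0.
split.
- move=> k1l k2l h k1l_equiv k2l_equiv HQ_cvg h_cont i.
  exact: (@cvg_Phi_expR R _ k1 k2 k1l k2l (h i) (HQ_antitone i)
            k1_near k2_near k1_to0 k2_to0 k1l_equiv k2l_equiv
            (HQ_cvg i) (h_cont i)).
- move=> k2l h k2l_equiv HQ_cvg h_cont i l2 l2_gt0.
  have := @cvg_Phi_expR R _ (fun _ => 0) k2 (fun _ _ => 0) k2l (fun _ => h i)
    (HQ_antitone i) (near_pinfty_nonneg _ _ (fun _ _ => lexx 0)) k2_near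
    (cvg_cst _) k2_to0 (fun l _ => equiv_pinfty_0 _ l) k2l_equiv _ _ 1 l2
    ltr01 l2_gt0.
  rewrite mulr0 oppr0 expR0; apply.
  + by move=> l1 l2' _ l2'_gt0; rewrite addr0; exact: HQ_cvg.
  + by move=> l1 l2' _ l2'_gt0; split; [exact: cvg_cst | exact: h_cont].
Qed.
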